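(* Let $G$ be a finite connected strongly regular graph that is not a complete graph $K_n$ ($n\ge2$) and that contains $C_3$ as a subgraph. Then $\mathrm{L}(G)$ is not strongly regular.
   Context: A finite simple graph on $v$ vertices is strongly regular with parameters $(v,k,\lambda,\mu)$, where $k,\lambda,\mu$ are nonnegative integers, if every vertex has degree $k$, every pair of adjacent vertices has exactly $\lambda$ common neighbours, and every pair of distinct non-adjacent vertices has exactly $\mu$ common neighbours. For a simple graph $G$, $\mathrm{L}(G)$ has vertex set $E(G)$, two vertices being adjacent iff the corresponding edges of $G$ share an endpoint. *)

From mathcomp Require Import all_boot all_order.
Set Implicit Arguments. Unset Strict Implicit. Unset Printing Implicit Defensive.

Section Graphs.
Variable T : finType.

Definition simple_graph (e : rel T) : Prop := symmetric e /\ irreflexive e.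

(* strongly regular with parameters (v,k,lambda,mu), v = #|T| *)
Definition srg_params (e : rel T) (k l m : nat) : Prop :=
  [/\ forall x, #|[set y | e x y]| = k,
      forall x y, e x y -> #|[set z | e x z && e y z]| = l &
      forall x y, x != y -> ~~ e x y -> #|[set z | e x z && e y z]| = m].

Definition strongly_regular (e : rel T) : Prop :=
  exists k l m, srg_params e k l m.

Definition connected (e : rel T) : Prop := forall x y, connect e x y.

Definition is_complete_n_ge2 (e : rel T) : Prop :=
  2 <= #|T| /\ forall x y, x != y -> e x y.

Definition has_triangle (e : rel T) : Prop :=
  exists x y z, [&& x != y, y != z, z != x, e x y, e y z & e z x].

Definition is_edge (e : rel T) (A : {set T}) : bool :=
  [exists x, exists y, e x y && (A == [set x; y])].

Definition edge_type (e : rel T) : finType := {A : {set T} | is_edge e A}.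

Definition line_rel (e : rel T) : rel (edge_type e) :=
  fun a b => (a != b) && (val a :&: val b != set0).
End Graphs.
Arguments line_rel {T} e _ _.
Arguments edge_type {T} e.

From mathcomp Require Import all_boot all_order.
Set Implicit Arguments. Unset Strict Implicit. Unset Printing Implicit Defensive.

(* Since G is connected but not complete, it has an induced path x - c - z, and
   since G is strongly regular with a triangle, the edge cx lies in a triangle
   cxd.  In L(G) the adjacent pairs ({c,x},{c,d}) and ({c,x},{c,z}) both share
   all the other edges at c as common neighbours; the first pair also has the
   common neighbour {x,d}, while the second has nothing more because x and z
   are not adjacent.  So lambda cannot be constant on L(G). *)

Definition common_nbhs (T : finType) (f : rel T) (x y : T) : {set T} :=
  [set z | f x z && f y z].

Section SimpleGraph.
Variables (T : finType) (e : rel T).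

Lemma path_exits_closed_nbhd (x u : T) (p : seq T) :
  path e u p -> (u == x) || e x u -> ~~ ((last u p == x) || e x (last u p)) ->
  exists c z, [&& e x c, e c z, ~~ e x z & x != z].
Proof.
elim: p u => [|w p IH] u /=; first by move=> _ ->.
move=> /andP[euw pw] hu hl.
case hw: ((w == x) || e x w); first exact: IH pw hw hl.
move: hw => /norP[wx exw].
case: (boolP (u == x)) hu => [/eqP ux _|ux /= exu]; first by rewrite -ux euw in exw.
by exists u, w; rewrite exu euw exw eq_sym wx.
Qed.

Lemma connect_nonadjacent_induced_path (x y : T) :
  x != y -> ~~ e x y -> connect e x y ->
  exists c z, [&& e x c, e c z, ~~ e x z & x != z].
Proof.
move=> xy nexy /connectP[p pp yl].
apply: (path_exits_closed_nbhd pp); first by rewrite eqxx.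
by rewrite -yl negb_or eq_sym xy.
Qed.

Lemma not_complete_nonadjacent :
  ~ is_complete_n_ge2 e -> 2 <= #|T| -> exists x y, x != y /\ ~~ e x y.
Proof.
move=> ncomp T2; case: (boolP [exists x, exists y, (x != y) && ~~ e x y]).
  by move=> /existsP[x /existsP[y /andP[xy nexy]]]; exists x, y.
move=> /existsPn none; case: ncomp; split=> // x y xy.
by move/existsPn: (none x) => /(_ y); rewrite xy negbK.
Qed.

Hypotheses (esym : symmetric e) (eirr : irreflexive e).

Lemma srg_triangle_edge_common_nbh k l m (x y : T) :
  srg_params e k l m -> has_triangle e -> e x y -> exists d, e x d && e y d.
Proof.
move=> [_ hl _] [x0 [y0 [z0 /and5P[_ _ _ ex0y0 /andP[ey0z0 ez0x0]]]]] exy.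
have l_gt0 : 0 < l.
  by rewrite -(hl _ _ ex0y0); apply/card_gt0P; exists z0; rewrite inE esym ez0x0.
by move: l_gt0; rewrite -(hl _ _ exy) => /card_gt0P[d]; rewrite inE; exists d.
Qed.

Lemma is_edge_pair (x y : T) : e x y -> is_edge e [set x; y].
Proof. by move=> exy; apply/existsP; exists x; apply/existsP; exists y; rewrite exy eqxx. Qed.

Definition edge_of (x y : T) (exy : e x y) : edge_type e :=
  exist (is_edge e) _ (is_edge_pair exy).

Lemma adjacent_of_is_edge (A : {set T}) (x y : T) :
  is_edge e A -> x \in A -> y \in A -> x != y -> e x y.
Proof.
case/existsP=> p /existsP[q /andP[epq /eqP->]]; rewrite !inE.
by case/orP=> /eqP-> /orP[] /eqP->; rewrite ?eqxx // esym.
Qed.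

Definition star (c : T) : {set edge_type e} := [set Z : edge_type e | c \in val Z].

Lemma neq_of_edge (x y : T) : e x y -> x != y.
Proof. by apply: contraTneq => ->; rewrite eirr. Qed.

Lemma edge_of_notin (x y w : T) (exy : e x y) :
  w != x -> w != y -> w \notin val (edge_of exy).
Proof. by rewrite !inE => /negbTE-> /negbTE->. Qed.

Lemma edge_of_neq (c x y : T) (ecx : e c x) (ecy : e c y) :
  x != y -> edge_of ecx != edge_of ecy.
Proof.
move=> xy; have xc : x != c by rewrite eq_sym neq_of_edge.
by apply: contraNneq (edge_of_notin ecy xc xy) => <-; rewrite !inE eqxx orbT.
Qed.

Lemma line_rel_meet (A B : edge_type e) (w : T) :
  A != B -> w \in val A -> w \in val B -> line_rel e A B.
Proof. by move=> AB wA wB; rewrite /line_rel AB; apply/set0Pn; exists w; rewrite inE wA. Qed.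

Lemma line_rel_edge_of (c x y : T) (ecx : e c x) (ecy : e c y) :
  x != y -> line_rel e (edge_of ecx) (edge_of ecy).
Proof. by move=> xy; apply: (line_rel_meet (w := c)); rewrite ?edge_of_neq // !inE eqxx. Qed.

Lemma star_setD_sub_line_common_nbhs (c : T) (A B : edge_type e) :
  A \in star c -> B \in star c -> star c :\ A :\ B \subset common_nbhs (line_rel e) A B.
Proof.
rewrite !inE => cA cB; apply/subsetP => Z; rewrite !inE => /and3P[ZB ZA cZ].
by rewrite (line_rel_meet _ cA cZ) 1?eq_sym // (line_rel_meet _ cB cZ) 1?eq_sym.
Qed.

Lemma line_common_nbhs_nonadjacent_sub_star (c x z : T) (ecx : e c x) (ecz : e c z) :
  ~~ e x z -> x != z ->
  common_nbhs (line_rel e) (edge_of ecx) (edge_of ecz)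
    \subset star c :\ edge_of ecx :\ edge_of ecz.
Proof.
move=> nexz xz; apply/subsetP => Z; rewrite !inE /line_rel -!andbA.
case/and4P=> AZ /set0Pn[w] wAZ BZ /set0Pn[w'] wBZ.
rewrite eq_sym BZ eq_sym AZ /=.
move: wAZ wBZ; rewrite !inE.
case/andP=> /orP[/eqP<- //|/eqP-> xZ].
case/andP=> /orP[/eqP<- //|/eqP-> zZ].
by case/negP: nexz; apply: adjacent_of_is_edge (valP Z) xZ zZ xz.
Qed.

Lemma line_common_nbhs_card_lt (c x d z : T)
    (ecx : e c x) (ecd : e c d) (exd : e x d) (ecz : e c z) :
  ~~ e x z -> x != z ->
  #|common_nbhs (line_rel e) (edge_of ecx) (edge_of ecz)|
    < #|common_nbhs (line_rel e) (edge_of ecx) (edge_of ecd)|.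
Proof.
move=> nexz xz; set A := edge_of ecx; set B := edge_of ecd; set B' := edge_of ecz.
set X := edge_of exd.
have cA : A \in star c by rewrite !inE eqxx.
have cB : B \in star c by rewrite !inE eqxx.
have cB' : B' \in star c by rewrite !inE eqxx.
have AB : A != B by apply: edge_of_neq; rewrite neq_of_edge.
have AB' : A != B' by apply: edge_of_neq.
have cX : X \notin star c by rewrite inE edge_of_notin ?neq_of_edge.
have XAB : X \in common_nbhs (line_rel e) A B.
  rewrite inE (line_rel_meet (w := x)) ?(line_rel_meet (w := d)) ?inE ?eqxx ?orbT //;
    by apply: contraNneq cX => <-.
have star_card (Y : edge_type e) : Y \in star c :\ A -> #|star c :\ A :\ Y| = #|star c :\ A|.-1.
  by move=> YA; rewrite (cardsD1 Y (star c :\ A)) YA.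
have sub : X |: (star c :\ A :\ B) \subset common_nbhs (line_rel e) A B.
  by rewrite subUset sub1set XAB star_setD_sub_line_common_nbhs.
apply: leq_trans (subset_leq_card sub).
rewrite cardsU1 !in_setD1 (negbTE cX) !andbF add1n ltnS.
apply: leq_trans (subset_leq_card (line_common_nbhs_nonadjacent_sub_star ecx ecz nexz xz)) _.
by rewrite !star_card // in_setD1 ?cB ?cB' andbT eq_sym.
Qed.

End SimpleGraph.

Theorem mainTheorem7 (T : finType) (e : rel T) :
  simple_graph e ->
  connected e ->
  strongly_regular e ->
  ~ is_complete_n_ge2 e ->
  has_triangle e ->
  ~ strongly_regular (line_rel e).
Proof.
move=> [esym eirr] conn [k [l [m srg]]] ncomp tri [kL [lL [mL [_ hL _]]]].
have T2 : 2 <= #|T|.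
  by case: tri => [x0 [y0 [z0 /andP[x0y0 _]]]]; apply/card_gt1P; exists x0, y0.
have [x [y [xy nexy]]] := not_complete_nonadjacent ncomp T2.
have [c [z /and4P[exc ecz nexz xz]]] := connect_nonadjacent_induced_path xy nexy (conn x y).
have ecx : e c x by rewrite esym.
have [d /andP[ecd exd]] := srg_triangle_edge_common_nbh esym srg tri ecx.
have lt := line_common_nbhs_card_lt esym eirr ecx ecd exd ecz nexz xz.
have eAB := line_rel_edge_of eirr ecx ecd (neq_of_edge eirr exd).
have eAB' := line_rel_edge_of eirr ecx ecz xz.
by move: lt; rewrite /common_nbhs (hL _ _ eAB) (hL _ _ eAB') ltnn.
Qed.
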